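(* Assume $p$ is unbounded. Fix $m\ge1$ and positive integers $n_1<n_2<\cdots<n_m$. For each $k\ge1$ let $(r^{(k)}_1,\dots,r^{(k)}_m)$ be an $m$-tuple of positive integers with $\sum_{i=1}^m p_{r^{(k)}_i}>0$, such that $\min_{1\le i\le m}r^{(k)}_i\to\infty$ as $k\to\infty$, and such that for every $1\le j<m$, $$\limsup_{k\to\infty}\frac{r^{(k)}_j}{\min_{j<i\le m}r^{(k)}_i}<\infty.$$ Let $$E_k=\bigcup_{i=1}^m\Big\{M_{n_i}=r^{(k)}_i,\ M_{n_j}<r^{(k)}_j\ \text{for all } 1\le j\le m,\ j\ne i\Big\}.$$ Then, as $k\to\infty$, $$\mathbf{P}[E_k]\sim\sum_{i=1}^m\mu^{n_i}p_{r^{(k)}_i}.$$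
   Context: Let $p=(p_0,p_1,p_2,\dots)$ be a probability distribution on the nonnegative integers with mean $\mu=\sum_k kp_k\in(0,\infty)$, and let $\tau(p)$ be a Galton–Watson tree with offspring distribution $p$: it starts with a single root at generation $0$, and every vertex independently has $k$ children with probability $p_k$. The out-degree of a vertex is its number of children. $M_n$ denotes the maximal out-degree among the vertices of generation $n$ (with $M_n=0$ if generation $n$ is empty). The distribution $p$ is called unbounded if the set $\{r:p_r>0\}$ is unbounded. *)

From Stdlib Require Import Reals Lra Lia List Classical ClassicalEpsilon.
Import ListNotations.
Open Scope R_scope.

(* A Galton--Watson tree observed up to generation N (the out-degrees of all
   vertices of generations 0..N are recorded).  [gwt d] is a (plane, i.e.
   ordered) tree whose root has "remaining depth" d:
     gwt 0     = nat           (only the out-degree of the vertex is recorded)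
     gwt (S d) = list (gwt d)  (the list of the subtrees rooted at the children;
                                the out-degree is the length of the list). *)
Fixpoint gwt (d : nat) : Type :=
  match d with
  | O => nat
  | S d' => list (gwt d')
  end.

Definition lsum {A : Type} (f : A -> R) (l : list A) : R :=
  fold_right (fun a acc => f a + acc) 0 l.

Definition lprod {A : Type} (f : A -> R) (l : list A) : R :=
  fold_right (fun a acc => f a * acc) 1 l.

Fixpoint weight (p : nat -> R) (d : nat) : gwt d -> R :=
  match d return gwt d -> R with
  | O => fun k => p k
  | S d' => fun l => p (length l) * lprod (weight p d') l
  end.

(* Probability of an event E on the first N generations of tau(p):
   the (countable) sum of the weights of the truncated trees satisfying E,
   defined as the supremum of finite partial sums. *)
Definition Prob (p : nat -> R) (N : nat) (E : gwt N -> Prop) : R :=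
  epsilon (inhabits 0)
    (fun x => is_lub (fun y => exists l : list (gwt N),
                         NoDup l /\ Forall E l /\ y = lsum (weight p N) l) x).

Fixpoint gen_degs (d : nat) : nat -> gwt d -> list nat :=
  match d return nat -> gwt d -> list nat with
  | O => fun n k => match n with O => [k] | S _ => [] end
  | S d' => fun n l => match n with
                       | O => [length l]
                       | S n' => flat_map (gen_degs d' n') l
                       end
  end.

(* M_n : maximal out-degree in generation n (0 if generation n is empty). *)
Definition maxdeg (d n : nat) (t : gwt d) : nat :=
  fold_right Nat.max 0%nat (gen_degs d n t).

Definition sum_lt (m : nat) (f : nat -> R) : R := lsum f (seq 0 m).

(* On the first N = n_m generations the law of tau(p) is a finite sum over
   truncated trees, so everything reduces to explicit formulas for the weight of
   "boxes" {M_g <= u g for all g} and of "peaked" trees, in which one vertex of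
   generation g has out-degree r and all other vertices of that generation have
   out-degree < r.
   Upper bound: on E_k some vertex of generation n_i has out-degree r_i, and the
   expected number of such vertices is at most mu^(n_i) p_(r_i).
   Lower bound: the peaked trees with peak r_i in generation n_i and with the
   generations n_j (j <> i) capped at r_j - 1 lie in E_k, disjointly in i.  Each
   ancestor of the peak contributes its size-biased mean truncated at a large L,
   which is close to mu, times the probability that its other subtrees stay in
   the box, which is close to 1; below the peak, its r_i subtrees stay in the box
   because r P[D >= r] <= E[D; D >= r] -> 0 and, by the ratio hypothesis,
   r_i P[D >= r_j] -> 0 for n_j > n_i.  This gives the weight
   p_(r_i) (mu - 3 eps)^(n_i) (1 - eps). *)

From Stdlib Require Import Reals Lra Lia List Classical ClassicalEpsilon.
Import ListNotations.
Open Scope R_scope.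

Lemma lsum_nil {A} (f : A -> R) : lsum f [] = 0.
Proof. reflexivity. Qed.

Lemma lsum_cons {A} (f : A -> R) a l : lsum f (a :: l) = f a + lsum f l.
Proof. reflexivity. Qed.

Lemma lsum_app {A} (f : A -> R) l1 l2 : lsum f (l1 ++ l2) = lsum f l1 + lsum f l2.
Proof. induction l1 as [|a l1 IH]; cbn [app]; [rewrite lsum_nil|rewrite !lsum_cons, IH]; lra. Qed.

Lemma lsum_map {A B} (f : B -> R) (g : A -> B) l : lsum f (map g l) = lsum (fun x => f (g x)) l.
Proof. induction l as [|a l IH]; [reflexivity|]. cbn [map]. rewrite !lsum_cons, IH. reflexivity. Qed.

Lemma lsum_flat_map {A B} (f : B -> R) (g : A -> list B) l :
  lsum f (flat_map g l) = lsum (fun x => lsum f (g x)) l.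
Proof.
  induction l as [|a l IH]; [reflexivity|].
  cbn [flat_map]. rewrite lsum_app, lsum_cons, IH. reflexivity.
Qed.

Lemma lsum_ext_in {A} (f g : A -> R) l : (forall x, In x l -> f x = g x) -> lsum f l = lsum g l.
Proof.
  induction l as [|a l IH]; intros H; [reflexivity|].
  rewrite !lsum_cons, H, IH; [reflexivity| |left; reflexivity].
  intros x Hx. apply H. right. exact Hx.
Qed.

Lemma lsum_le_in {A} (f g : A -> R) l : (forall x, In x l -> f x <= g x) -> lsum f l <= lsum g l.
Proof.
  induction l as [|a l IH]; intros H; [rewrite !lsum_nil; lra|]. rewrite !lsum_cons.
  assert (f a <= g a) by (apply H; left; reflexivity).
  assert (lsum f l <= lsum g l) by (apply IH; intros; apply H; right; assumption). lra.
Qed.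

Lemma lsum_zero {A} (l : list A) : lsum (fun _ => 0) l = 0.
Proof. induction l as [|a l IH]; [reflexivity|]. rewrite lsum_cons, IH. lra. Qed.

Lemma lsum_nonneg {A} (f : A -> R) l : (forall x, In x l -> 0 <= f x) -> 0 <= lsum f l.
Proof. intros H. rewrite <- (lsum_zero l). apply lsum_le_in. exact H. Qed.

Lemma lsum_add {A} (f g : A -> R) l : lsum (fun x => f x + g x) l = lsum f l + lsum g l.
Proof. induction l as [|a l IH]; [rewrite !lsum_nil; lra|]. rewrite !lsum_cons, IH. lra. Qed.

Lemma lsum_scal {A} (c : R) (f : A -> R) l : lsum (fun x => c * f x) l = c * lsum f l.
Proof. induction l as [|a l IH]; [rewrite !lsum_nil; lra|]. rewrite !lsum_cons, IH. lra. Qed.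

Lemma lsum_const {A} (c : R) (l : list A) : lsum (fun _ => c) l = INR (length l) * c.
Proof.
  induction l as [|a l IH]; [rewrite lsum_nil; simpl; lra|].
  rewrite lsum_cons, IH. cbn [length]. rewrite S_INR. lra.
Qed.

Lemma lsum_comm {A B} (f : A -> B -> R) (L : list B) (I : list A) :
  lsum (fun t => lsum (fun i => f i t) I) L = lsum (fun i => lsum (fun t => f i t) L) I.
Proof.
  induction L as [|b L IH]; [rewrite lsum_nil; symmetry; apply lsum_zero|].
  rewrite lsum_cons, IH, <- lsum_add. apply lsum_ext_in. intros; rewrite lsum_cons. ring.
Qed.

Lemma lsum_ge_member {A} (f : A -> R) l x :
  (forall y, In y l -> 0 <= f y) -> In x l -> f x <= lsum f l.
Proof.
  induction l as [|a l IH]; intros H Hx; [destruct Hx|].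
  rewrite lsum_cons. destruct Hx as [<-|Hx].
  - assert (0 <= lsum f l) by (apply lsum_nonneg; intros; apply H; right; assumption). lra.
  - assert (f x <= lsum f l) by (apply IH; auto; intros; apply H; right; assumption).
    assert (0 <= f a) by (apply H; left; reflexivity). lra.
Qed.

Lemma lsum_pos_member {A} (f : A -> R) l : 0 < lsum f l -> exists x, In x l /\ 0 < f x.
Proof.
  induction l as [|a l IH]; intros H; [rewrite lsum_nil in H; lra|].
  rewrite lsum_cons in H. destruct (Rlt_dec 0 (f a)) as [Ha|Ha].
  - exists a. split; [left|]; auto.
  - destruct IH as [x [Hx Hfx]]; [lra|]. exists x. split; [right|]; auto.
Qed.

Lemma lsum_le_incl {A} (f : A -> R) (l l' : list A) :
  NoDup l -> incl l l' -> (forall x, In x l' -> 0 <= f x) -> lsum f l <= lsum f l'.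
Proof.
  revert l'. induction l as [|a l IH]; intros l' Hnd Hi Hf.
  - rewrite lsum_nil. apply lsum_nonneg; auto.
  - inversion Hnd as [|? ? Ha Hnd']; subst.
    destruct (in_split a l') as [l1 [l2 ->]]; [apply Hi; left; reflexivity|].
    assert (Hrest : lsum f l <= lsum f (l1 ++ l2)).
    { apply IH; auto.
      - intros x Hx. assert (In x (l1 ++ a :: l2)) as Hx' by (apply Hi; right; exact Hx).
        apply in_app_or in Hx'. apply in_or_app. destruct Hx' as [H|[H|H]]; auto.
        subst; contradiction.
      - intros x Hx. apply Hf. apply in_app_or in Hx. apply in_or_app.
        destruct Hx; [left|right; right]; auto. }
    rewrite lsum_app in Hrest. rewrite lsum_cons, lsum_app, lsum_cons. lra.
Qed.

Lemma lprod_cons {A} (f : A -> R) a l : lprod f (a :: l) = f a * lprod f l.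
Proof. reflexivity. Qed.

Lemma lprod_app {A} (f : A -> R) l1 l2 : lprod f (l1 ++ l2) = lprod f l1 * lprod f l2.
Proof.
  induction l1 as [|a l1 IH]; cbn [app]; [simpl; lra|]. rewrite !lprod_cons, IH. lra.
Qed.

Lemma lprod_nonneg {A} (f : A -> R) l : (forall x, In x l -> 0 <= f x) -> 0 <= lprod f l.
Proof.
  induction l as [|a l IH]; intros H; [simpl; lra|]. rewrite lprod_cons.
  apply Rmult_le_pos; [apply H; left; reflexivity|apply IH; intros; apply H; right; assumption].
Qed.

Lemma NoDup_flat_map {A B} (f : A -> list B) l :
  NoDup l -> (forall x, In x l -> NoDup (f x)) ->
  (forall x y z, In x l -> In y l -> x <> y -> In z (f x) -> ~ In z (f y)) ->
  NoDup (flat_map f l).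
Proof.
  induction l as [|a l IH]; intros Hnd H1 H2; simpl; [constructor|].
  inversion Hnd; subst. apply NoDup_app.
  - apply H1; left; reflexivity.
  - apply IH; auto.
    + intros; apply H1; right; assumption.
    + intros x y z ? ? ? ?. apply (H2 x y z); try right; assumption.
  - intros z Hz Hz'. apply in_flat_map in Hz'. destruct Hz' as [y [Hy Hzy]].
    apply (H2 a y z); [left|right| |..]; auto. intros ->. contradiction.
Qed.

Lemma app_inj_length {A} (a b c d : list A) :
  length a = length c -> a ++ b = c ++ d -> a = c /\ b = d.
Proof.
  revert c. induction a as [|x a IH]; intros [|y c] Hl He; simpl in *; try lia; auto.
  inversion He; subst. destruct (IH c) as [-> ->]; auto.
Qed.

Fixpoint tuples {A} (k : nat) (L : list A) : list (list A) :=
  match k with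
  | O => [[]]
  | S k' => flat_map (fun y => map (cons y) (tuples k' L)) L
  end.

Lemma In_tuples {A} k (L : list A) x :
  In x (tuples k L) <-> length x = k /\ (forall y, In y x -> In y L).
Proof.
  revert x. induction k as [|k IH]; intros x; simpl.
  - split.
    + intros [<-|[]]. split; [reflexivity|intros y []].
    + intros [H _]. destruct x; simpl in H; [left; reflexivity|lia].
  - rewrite in_flat_map. split.
    + intros [y [Hy Hx]]. apply in_map_iff in Hx. destruct Hx as [x' [<- Hx']].
      apply IH in Hx'. destruct Hx' as [Hl Hin]. simpl. split; [lia|]. intros z [<-|Hz]; auto.
    + intros [Hl Hin]. destruct x as [|y x']; simpl in Hl; [lia|].
      exists y. split; [apply Hin; left; reflexivity|]. apply in_map. apply IH.
      split; [lia|]. intros; apply Hin; right; assumption.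
Qed.

Lemma NoDup_tuples {A} k (L : list A) : NoDup L -> NoDup (tuples k L).
Proof.
  intros HL. induction k as [|k IH]; simpl; [constructor; [intros []|constructor]|].
  apply NoDup_flat_map; auto.
  - intros y _. apply NoDup_map_NoDup_ForallPairs; auto. intros a b _ _ H; inversion H; auto.
  - intros y y' z _ _ Hne Hz Hz'. apply in_map_iff in Hz, Hz'.
    destruct Hz as [a [<- _]]. destruct Hz' as [b [E _]]. inversion E; auto.
Qed.

Lemma lsum_tuples {A} (h : A -> R) k L : lsum (lprod h) (tuples k L) = (lsum h L) ^ k.
Proof.
  induction k as [|k IH]; [simpl; unfold lsum, lprod; simpl; lra|].
  cbn [tuples]. rewrite lsum_flat_map, <- tech_pow_Rmult, <- IH, Rmult_comm, <- lsum_scal.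
  apply lsum_ext_in. intros y _. rewrite lsum_map, Rmult_comm, <- lsum_scal. reflexivity.
Qed.

(* The derivative of [lsum_tuples] in the direction [c]. *)
Lemma lsum_tuples_count {A} (h c : A -> R) k L :
  lsum (fun x => lprod h x * lsum c x) (tuples k L) =
  INR k * lsum (fun y => h y * c y) L * (lsum h L) ^ (pred k).
Proof.
  induction k as [|k IH]; [simpl; unfold lsum, lprod; simpl; lra|].
  cbn [tuples]. rewrite lsum_flat_map.
  transitivity (lsum (fun y => lsum h L ^ k * (h y * c y)
     + (INR k * lsum (fun y => h y * c y) L * lsum h L ^ pred k) * h y) L).
  - apply lsum_ext_in. intros y _. rewrite lsum_map.
    transitivity (h y * c y * lsum (lprod h) (tuples k L)
                  + h y * lsum (fun x => lprod h x * lsum c x) (tuples k L)).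
    + rewrite <- !lsum_scal, <- lsum_add. apply lsum_ext_in. intros x _.
      rewrite lprod_cons, lsum_cons. ring.
    + rewrite lsum_tuples, IH. ring.
  - rewrite lsum_add, !lsum_scal. destruct k as [|k]; [simpl; ring|].
    rewrite (S_INR (S k)), S_INR. simpl pred. rewrite <- (tech_pow_Rmult _ k). ring.
Qed.

Definition pointed_tuples {A} (b a : nat) (L1 L2 : list A) : list (list A) :=
  flat_map (fun pre => flat_map (fun y => map (fun post => pre ++ y :: post) (tuples a L2)) L1)
    (tuples b L2).

Lemma In_pointed_tuples {A} b a (L1 L2 : list A) t : In t (pointed_tuples b a L1 L2) ->
  exists pre y post, t = pre ++ y :: post /\ length pre = b /\ length post = a /\
    (forall z, In z pre -> In z L2) /\ In y L1 /\ (forall z, In z post -> In z L2).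
Proof.
  unfold pointed_tuples. intros H. apply in_flat_map in H. destruct H as [pre [Hpre H]].
  apply in_flat_map in H. destruct H as [y [Hy H]]. apply in_map_iff in H.
  destruct H as [post [<- Hpost]]. apply In_tuples in Hpre, Hpost.
  exists pre, y, post. intuition.
Qed.

Lemma pointed_tuples_length {A} b a (L1 L2 : list A) t :
  In t (pointed_tuples b a L1 L2) -> length t = (b + S a)%nat.
Proof.
  intros H. apply In_pointed_tuples in H. destruct H as [pre [y [post [-> [H1 [H2 _]]]]]].
  rewrite length_app. simpl. lia.
Qed.

Lemma NoDup_pointed_tuples {A} b a (L1 L2 : list A) :
  NoDup L1 -> NoDup L2 -> NoDup (pointed_tuples b a L1 L2).
Proof.
  intros N1 N2. unfold pointed_tuples. apply NoDup_flat_map; [apply NoDup_tuples; auto| |].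
  - intros pre _. apply NoDup_flat_map; auto.
    + intros y _. apply NoDup_map_NoDup_ForallPairs; [|apply NoDup_tuples; auto].
      intros x1 x2 _ _ E. apply app_inv_head in E. inversion E; auto.
    + intros y1 y2 z _ _ Hne H1 H2. apply in_map_iff in H1, H2. destruct H1 as [x1 [<- _]].
      destruct H2 as [x2 [E _]]. apply app_inv_head in E. inversion E; auto.
  - intros pre1 pre2 z H1 H2 Hne Hz Hz'. apply In_tuples in H1, H2.
    apply in_flat_map in Hz. destruct Hz as [y1 [_ Hz]].
    apply in_map_iff in Hz. destruct Hz as [x1 [<- _]].
    apply in_flat_map in Hz'. destruct Hz' as [y2 [_ Hz']].
    apply in_map_iff in Hz'. destruct Hz' as [x2 [E _]].
    apply app_inj_length in E; [destruct E; auto|]. destruct H1, H2; congruence.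
Qed.

Lemma pointed_tuples_position_unique {A} (L1 L2 : list A) b1 a1 b2 a2 t :
  (forall z, In z L1 -> ~ In z L2) ->
  In t (pointed_tuples b1 a1 L1 L2) -> In t (pointed_tuples b2 a2 L1 L2) -> b1 = b2.
Proof.
  assert (Hcross : forall pre1 y1 post1 pre2 y2 post2,
    (forall z, In z L1 -> ~ In z L2) -> pre1 ++ y1 :: post1 = pre2 ++ y2 :: post2 ->
    (length pre1 < length pre2)%nat -> In y1 L1 -> (forall z, In z pre2 -> In z L2) -> False).
  { intros pre1 y1 post1 pre2 y2 post2 Hd E Hl Hy Hpre.
    assert (H : nth (length pre1) (pre1 ++ y1 :: post1) y1 = nth (length pre1) pre2 y1)
      by (rewrite E; apply app_nth1; auto).
    rewrite nth_middle in H. apply (Hd y1); auto. apply Hpre. rewrite H. apply nth_In; auto. }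
  intros Hd H1 H2.
  apply In_pointed_tuples in H1. destruct H1 as [pre1 [y1 [post1 [-> [<- [_ [P1 [Y1 _]]]]]]]].
  apply In_pointed_tuples in H2. destruct H2 as [pre2 [y2 [post2 [E [<- [_ [P2 [Y2 _]]]]]]]].
  destruct (Nat.lt_trichotomy (length pre1) (length pre2)) as [H|[H|H]]; auto; exfalso.
  - exact (Hcross _ _ _ _ _ _ Hd E H Y1 P2).
  - symmetry in E. exact (Hcross _ _ _ _ _ _ Hd E H Y2 P1).
Qed.

Lemma lsum_pointed_tuples {A} (h : A -> R) b a L1 L2 :
  lsum (lprod h) (pointed_tuples b a L1 L2) = (lsum h L2) ^ b * lsum h L1 * (lsum h L2) ^ a.
Proof.
  unfold pointed_tuples. rewrite lsum_flat_map.
  rewrite (lsum_ext_in _ (fun pre => (lsum h L1 * lsum h L2 ^ a) * lprod h pre)).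
  { rewrite lsum_scal, lsum_tuples. ring. }
  intros pre _. rewrite lsum_flat_map.
  rewrite (lsum_ext_in _ (fun y => (lprod h pre * lsum (lprod h) (tuples a L2)) * h y)).
  { rewrite lsum_scal, lsum_tuples. ring. }
  intros y _. rewrite lsum_map, Rmult_comm, <- !lsum_scal. apply lsum_ext_in. intros post _.
  rewrite lprod_app, lprod_cons. ring.
Qed.

Definition shift (u : nat -> nat) : nat -> nat := fun g => u (S g).

Definition update (u : nat -> nat) (g x : nat) : nat -> nat :=
  fun h => if Nat.eqb h g then x else u h.

Lemma gen_degs_S0 d (t : gwt (S d)) : gen_degs (S d) 0 t = [length t].
Proof. reflexivity. Qed.

Lemma gen_degs_SS d g (t : gwt (S d)) : gen_degs (S d) (S g) t = flat_map (gen_degs d g) t.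
Proof. reflexivity. Qed.

Lemma weight_S p d (l : gwt (S d)) : weight p (S d) l = p (length l) * lprod (weight p d) l.
Proof. reflexivity. Qed.

Lemma weight_nonneg p d (t : gwt d) : (forall k, 0 <= p k) -> 0 <= weight p d t.
Proof.
  intros Hp. revert t. induction d as [|d IH]; intros t; [apply Hp|].
  rewrite weight_S. apply Rmult_le_pos; auto. apply lprod_nonneg. intros; auto.
Qed.

Fixpoint trees_le (d : nat) : (nat -> nat) -> list (gwt d) :=
  match d return (nat -> nat) -> list (gwt d) with
  | O => fun u => seq 0 (S (u 0%nat))
  | S d' => fun u => flat_map (fun k => tuples k (trees_le d' (shift u))) (seq 0 (S (u 0%nat)))
  end.

Lemma In_trees_le d : forall u (t : gwt d),
  In t (trees_le d u) <-> (forall g x, In x (gen_degs d g t) -> (x <= u g)%nat).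
Proof.
  induction d as [|d IH]; intros u t.
  - cbn [trees_le]. rewrite in_seq. split.
    + intros H [|g] x Hx; simpl in Hx; [destruct Hx as [<-|[]]; lia|destruct Hx].
    + intros H. specialize (H 0%nat t). simpl in H. assert (t <= u 0%nat)%nat by auto. lia.
  - cbn [trees_le]. rewrite in_flat_map. split.
    + intros [k [Hk Ht]] [|g] x Hx; apply in_seq in Hk; apply In_tuples in Ht; destruct Ht as [Hl Hin].
      * rewrite gen_degs_S0 in Hx. destruct Hx as [<-|[]]. lia.
      * rewrite gen_degs_SS in Hx. apply in_flat_map in Hx. destruct Hx as [c [Hc Hxc]].
        apply Hin in Hc. apply (IH (shift u) c) with (g := g); auto.
    + intros H. exists (length t). split.
      * apply in_seq. assert (length t <= u 0%nat)%nat by (apply (H 0%nat); left; auto). lia.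
      * apply In_tuples. split; auto. intros c Hc. apply IH. intros g x Hx.
        apply (H (S g)). rewrite gen_degs_SS. apply in_flat_map. exists c; auto.
Qed.

Lemma trees_le_bound d u (t : gwt d) g x :
  In t (trees_le d u) -> In x (gen_degs d g t) -> (x <= u g)%nat.
Proof. intros H. apply (proj1 (In_trees_le d u t) H). Qed.

Lemma NoDup_trees_le d : forall u, NoDup (trees_le d u).
Proof.
  induction d as [|d IH]; intros u; cbn [trees_le]; [apply seq_NoDup|].
  apply NoDup_flat_map; [apply seq_NoDup|intros; apply NoDup_tuples; auto|].
  intros x y z _ _ Hne Hx Hy. apply In_tuples in Hx, Hy. destruct Hx, Hy. congruence.
Qed.

Lemma gen_degs_bounded d : forall (t : gwt d),
  exists K, forall g x, In x (gen_degs d g t) -> (x <= K)%nat.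
Proof.
  induction d as [|d IH]; intros t.
  - exists t. intros [|g] x Hx; simpl in Hx; [destruct Hx as [<-|[]]; lia|destruct Hx].
  - assert (Hl : forall l : list (gwt d), exists K, (length l <= K)%nat /\
              forall c, In c l -> forall g x, In x (gen_degs d g c) -> (x <= K)%nat).
    { induction l as [|c l [K1 [HK1 HK1']]]; [exists 0%nat; split; [simpl; lia|intros c []]|].
      destruct (IH c) as [K2 HK2]. exists (Nat.max (S K1) K2). split; [cbn [length]; lia|].
      intros c' [<-|Hc'] g x Hx; [specialize (HK2 g x Hx)|specialize (HK1' c' Hc' g x Hx)]; lia. }
    destruct (Hl t) as [K [HK1 HK2]]. exists K. intros [|g] x Hx.
    + rewrite gen_degs_S0 in Hx. destruct Hx as [<-|[]]. auto.
    + rewrite gen_degs_SS in Hx. apply in_flat_map in Hx. destruct Hx as [c [Hc Hx]]. eauto.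
Qed.

Lemma incl_trees_le_const d (l : list (gwt d)) : exists K, incl l (trees_le d (fun _ => K)).
Proof.
  induction l as [|t l [K1 HK1]]; [exists 0%nat; intros x []|].
  destruct (gen_degs_bounded d t) as [K2 HK2]. exists (Nat.max K1 K2).
  intros x [<-|Hx]; apply In_trees_le; intros g y Hy.
  - specialize (HK2 g y Hy). lia.
  - pose proof (trees_le_bound _ _ _ g y (HK1 x Hx) Hy). simpl in *. lia.
Qed.

Fixpoint box_prob (p : nat -> R) (d : nat) (u : nat -> nat) : R :=
  match d with
  | O => lsum p (seq 0 (S (u 0%nat)))
  | S d' => lsum (fun k => p k * (box_prob p d' (shift u)) ^ k) (seq 0 (S (u 0%nat)))
  end.

Lemma lsum_weight_tuples p d k (L : list (gwt d)) :
  lsum (weight p (S d)) (tuples k L) = p k * lsum (weight p d) L ^ k.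
Proof.
  rewrite (lsum_ext_in _ (fun l => p k * lprod (weight p d) l)), lsum_scal, lsum_tuples;
    [reflexivity|].
  intros l Hl. apply In_tuples in Hl. destruct Hl as [<- _]. reflexivity.
Qed.

Lemma lsum_weight_trees_le p d : forall u, lsum (weight p d) (trees_le d u) = box_prob p d u.
Proof.
  induction d as [|d IH]; intros u; [reflexivity|].
  cbn [trees_le box_prob]. rewrite lsum_flat_map. apply lsum_ext_in. intros k _.
  rewrite lsum_weight_tuples, IH. reflexivity.
Qed.

(* The k children of each ancestor of the peak are listed as b boxed subtrees,
   the subtree containing the peak, and k - 1 - b boxed subtrees; the boxes cap
   generation g at r - 1, so the peak is the only vertex of out-degree r there. *)
Fixpoint trees_peak (d : nat) : nat -> nat -> (nat -> nat) -> list (gwt d) :=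
  match d return nat -> nat -> (nat -> nat) -> list (gwt d) with
  | O => fun g r u => match g with O => [r] | S _ => [] end
  | S d' => fun g r u => match g with
     | O => tuples r (trees_le d' (shift u))
     | S g' => flat_map (fun k => flat_map (fun b =>
                  pointed_tuples b (k - 1 - b) (trees_peak d' g' r (shift u))
                    (trees_le d' (update (shift u) g' (r - 1))))
                  (seq 0 k)) (seq 0 (S (u 0%nat)))
     end
  end.

Lemma trees_peak_S0 d r u : trees_peak (S d) 0 r u = tuples r (trees_le d (shift u)).
Proof. reflexivity. Qed.

Lemma trees_peak_SS d g r u : trees_peak (S d) (S g) r u =
  flat_map (fun k => flat_map (fun b =>
      pointed_tuples b (k - 1 - b) (trees_peak d g r (shift u))
        (trees_le d (update (shift u) g (r - 1))))
    (seq 0 k)) (seq 0 (S (u 0%nat))).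
Proof. reflexivity. Qed.

Lemma trees_peak_spec d : forall g r u (t : gwt d), In t (trees_peak d g r u) ->
  In r (gen_degs d g t) /\ (forall x, In x (gen_degs d g t) -> (x <= r)%nat) /\
  (forall h x, h <> g -> In x (gen_degs d h t) -> (x <= u h)%nat).
Proof.
  induction d as [|d IH]; intros [|g] r u t Ht.
  - destruct Ht as [<-|[]]. split; [left; reflexivity|split].
    + intros x [<-|[]]; lia.
    + intros [|h] x Hh; simpl; [lia|intros []].
  - destruct Ht.
  - rewrite trees_peak_S0 in Ht. apply In_tuples in Ht. destruct Ht as [<- Hin].
    split; [left; reflexivity|split; [intros x [<-|[]]; lia|]].
    intros [|h] x Hh Hx; [lia|]. rewrite gen_degs_SS in Hx. apply in_flat_map in Hx.
    destruct Hx as [c [Hc Hx]]. exact (trees_le_bound _ _ _ _ _ (Hin c Hc) Hx).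
  - rewrite trees_peak_SS in Ht.
    apply in_flat_map in Ht. destruct Ht as [k [Hk Ht]]. apply in_flat_map in Ht.
    destruct Ht as [b [Hb Ht]]. apply In_pointed_tuples in Ht.
    destruct Ht as [pre [y [post [-> [Hpre [Hpost [Hp1 [Hy Hp2]]]]]]]].
    apply in_seq in Hk, Hb.
    assert (Hbox : forall c, In c (pre ++ y :: post) -> c <> y ->
                     In c (trees_le d (update (shift u) g (r - 1)))).
    { intros c Hc Hne. apply in_app_or in Hc. destruct Hc as [Hc|[Hc|Hc]]; auto. congruence. }
    destruct (IH g r (shift u) y Hy) as [Y1 [Y2 Y3]].
    split; [|split].
    + rewrite gen_degs_SS. apply in_flat_map. exists y. split; auto. apply in_or_app; simpl; auto.
    + intros x Hx. rewrite gen_degs_SS in Hx. apply in_flat_map in Hx. destruct Hx as [c [Hc Hx]].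
      destruct (classic (c = y)) as [->|Hne]; auto.
      pose proof (trees_le_bound _ _ _ _ _ (Hbox c Hc Hne) Hx) as Hc'. unfold update in Hc'.
      rewrite Nat.eqb_refl in Hc'. lia.
    + intros [|h] x Hh Hx.
      * rewrite gen_degs_S0 in Hx. destruct Hx as [<-|[]]. rewrite length_app. simpl. lia.
      * rewrite gen_degs_SS in Hx. apply in_flat_map in Hx. destruct Hx as [c [Hc Hx]].
        destruct (classic (c = y)) as [->|Hne]; [apply Y3 in Hx; auto|].
        pose proof (trees_le_bound _ _ _ _ _ (Hbox c Hc Hne) Hx) as Hc'. unfold update in Hc'.
        replace (Nat.eqb h g) with false in Hc' by (symmetry; apply Nat.eqb_neq; lia). exact Hc'.
Qed.

Lemma trees_peak_disjoint d g r u (c : gwt d) :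
  (1 <= r)%nat -> In c (trees_peak d g r u) -> ~ In c (trees_le d (update u g (r - 1))).
Proof.
  intros Hr H1 H2. apply trees_peak_spec in H1. destruct H1 as [H1 _].
  pose proof (trees_le_bound _ _ _ _ _ H2 H1) as H3. unfold update in H3.
  rewrite Nat.eqb_refl in H3. lia.
Qed.

Lemma NoDup_trees_peak d : forall g r u, (1 <= r)%nat -> NoDup (trees_peak d g r u).
Proof.
  induction d as [|d IH]; intros [|g] r u Hr.
  - repeat constructor. intros [].
  - constructor.
  - apply NoDup_tuples, NoDup_trees_le.
  - rewrite trees_peak_SS.
    assert (Hdisj : forall z, In z (trees_peak d g r (shift u)) ->
                      ~ In z (trees_le d (update (shift u) g (r - 1))))
      by (intros z; apply trees_peak_disjoint; auto).
    apply NoDup_flat_map; [apply seq_NoDup| |].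
    + intros k _. apply NoDup_flat_map; [apply seq_NoDup| |].
      * intros b _. apply NoDup_pointed_tuples; [apply IH; auto|apply NoDup_trees_le].
      * intros b1 b2 z _ _ Hne H1 H2. exact (Hne (pointed_tuples_position_unique _ _ _ _ _ _ _ Hdisj H1 H2)).
    + intros k1 k2 z Hk1 Hk2 Hne H1 H2.
      apply in_flat_map in H1. destruct H1 as [b1 [Hb1 H1]].
      apply in_flat_map in H2. destruct H2 as [b2 [Hb2 H2]].
      apply pointed_tuples_length in H1, H2. apply in_seq in Hb1, Hb2. lia.
Qed.

Lemma lsum_weight_trees_peak_S0 p d r u :
  lsum (weight p (S d)) (trees_peak (S d) 0 r u) = p r * (box_prob p d (shift u)) ^ r.
Proof. rewrite trees_peak_S0, lsum_weight_tuples, lsum_weight_trees_le. reflexivity. Qed.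

Lemma lsum_weight_trees_peak_SS p d g r u :
  lsum (weight p (S d)) (trees_peak (S d) (S g) r u) =
  lsum (fun k => p k * INR k * lsum (weight p d) (trees_peak d g r (shift u)) *
                 (box_prob p d (update (shift u) g (r - 1))) ^ (pred k)) (seq 0 (S (u 0%nat))).
Proof.
  rewrite trees_peak_SS, lsum_flat_map. apply lsum_ext_in. intros k _.
  rewrite lsum_flat_map.
  rewrite (lsum_ext_in _ (fun b => p k * lsum (weight p d) (trees_peak d g r (shift u)) *
                 (box_prob p d (update (shift u) g (r - 1))) ^ (pred k))).
  { rewrite lsum_const, length_seq. ring. }
  intros b Hb. apply in_seq in Hb.
  rewrite (lsum_ext_in _ (fun l => p k * lprod (weight p d) l)).
  - rewrite lsum_scal, lsum_pointed_tuples, lsum_weight_trees_le.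
    replace (pred k) with (b + (k - 1 - b))%nat by lia. rewrite pow_add. ring.
  - intros l Hl. pose proof (pointed_tuples_length _ _ _ _ _ Hl) as E. rewrite weight_S.
    replace k with (b + S (k - 1 - b))%nat at 1 by lia. rewrite <- E. reflexivity.
Qed.

Definition deg_count d g r (t : gwt d) : R := INR (count_occ Nat.eq_dec (gen_degs d g t) r).

Lemma deg_count_SS d g r (l : gwt (S d)) : deg_count (S d) (S g) r l = lsum (deg_count d g r) l.
Proof.
  unfold deg_count. rewrite gen_degs_SS. induction l as [|c l IH]; [reflexivity|].
  cbn [flat_map]. rewrite count_occ_app, plus_INR, lsum_cons, IH. reflexivity.
Qed.

Lemma count_occ_singleton x r :
  INR (count_occ Nat.eq_dec [x] r) = if Nat.eqb x r then 1 else 0.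
Proof.
  simpl. destruct (Nat.eq_dec x r) as [->|Hne]; [rewrite Nat.eqb_refl; simpl; lra|].
  apply Nat.eqb_neq in Hne. rewrite Hne. reflexivity.
Qed.

Lemma lsum_weight_tuples_count p d k (L : list (gwt d)) (c : gwt d -> R) :
  lsum (fun l => weight p (S d) l * lsum c l) (tuples k L) =
  p k * INR k * lsum (fun t => weight p d t * c t) L * lsum (weight p d) L ^ pred k.
Proof.
  rewrite (lsum_ext_in _ (fun l => p k * (lprod (weight p d) l * lsum c l))),
    lsum_scal, lsum_tuples_count; [ring|].
  intros l Hl. apply In_tuples in Hl. destruct Hl as [<- _]. rewrite weight_S, Rmult_assoc. reflexivity.
Qed.

Lemma lsum_indicator_le (f : nat -> R) r (l : list nat) : NoDup l -> 0 <= f r ->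
  lsum (fun k => if Nat.eqb k r then f k else 0) l <= f r.
Proof.
  induction l as [|a l IH]; intros Hnd Hf; [rewrite lsum_nil; lra|].
  inversion Hnd as [|? ? Ha Hnd']; subst. rewrite lsum_cons. destruct (Nat.eqb_spec a r).
  - subst. rewrite (lsum_ext_in _ (fun _ => 0)), lsum_zero; [lra|].
    intros x Hx. destruct (Nat.eqb_spec x r); [subst; contradiction|reflexivity].
  - specialize (IH Hnd' Hf). lra.
Qed.

Lemma pow_ge_bernoulli x k : 0 <= x <= 1 -> 1 - INR k * (1 - x) <= x ^ k.
Proof.
  intros Hx. induction k as [|k IH]; [simpl; lra|]. rewrite S_INR. simpl.
  assert (0 <= INR k) by apply pos_INR.
  assert (x * (1 - INR k * (1 - x)) <= x * x ^ k) by (apply Rmult_le_compat_l; lra).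
  assert (0 <= INR k * ((1 - x) * (1 - x))) by (apply Rmult_le_pos; nra). nra.
Qed.

Lemma mul_pow_le a w n : 0 <= a -> 0 <= w <= 1 -> a * w ^ n <= a.
Proof.
  intros Ha Hw. assert (w ^ n <= 1) by (rewrite <- (pow1 n); apply pow_incr; lra).
  assert (0 <= w ^ n) by (apply pow_le; lra). nra.
Qed.

Definition geom_sum (mu : R) d := lsum (fun h => mu ^ h) (seq 0 (S d)).

Lemma geom_sum_nonneg mu d : 0 <= mu -> 0 <= geom_sum mu d.
Proof. intros. apply lsum_nonneg. intros; apply pow_le; auto. Qed.

Lemma geom_sum_le_S mu d : 0 <= mu -> geom_sum mu d <= geom_sum mu (S d).
Proof.
  intros H. unfold geom_sum. rewrite (seq_S (S d)), lsum_app, lsum_cons, lsum_nil.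
  assert (0 <= mu ^ (0 + S d)) by (apply pow_le; auto). lra.
Qed.

Section Offspring.

Variable p : nat -> R.
Hypothesis p_nonneg : forall k, 0 <= p k.

Definition mass_upto x := lsum p (seq 0 (S x)).
Definition mean_upto x := lsum (fun k => INR k * p k) (seq 0 (S x)).
Definition mass_above x := 1 - mass_upto x.

Hypothesis mass_upto_le_1 : forall x, mass_upto x <= 1.

Variable mu : R.
Hypothesis mean_upto_le : forall x, mean_upto x <= mu.

Lemma mu_nonneg : 0 <= mu.
Proof. pose proof (mean_upto_le 0). unfold mean_upto in *. simpl in *. lra. Qed.

Lemma mass_above_nonneg x : 0 <= mass_above x.
Proof. unfold mass_above. pose proof (mass_upto_le_1 x). lra. Qed.

Lemma box_prob_bounds d u : 0 <= box_prob p d u <= 1.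
Proof.
  revert u. induction d as [|d IH]; intros u; cbn [box_prob].
  - split; [apply lsum_nonneg; auto|apply mass_upto_le_1].
  - destruct (IH (shift u)) as [Ha Hb]. split.
    + apply lsum_nonneg. intros; apply Rmult_le_pos; auto. apply pow_le; auto.
    + eapply Rle_trans; [|apply (mass_upto_le_1 (u 0%nat))]. apply lsum_le_in. intros k _.
      apply mul_pow_le; auto.
Qed.

Lemma lsum_weight_deg_count_root d r u :
  lsum (fun t => weight p d t * deg_count d 0 r t) (trees_le d u) <= p r.
Proof.
  destruct d as [|d]; cbn [trees_le].
  - eapply Rle_trans; [|apply (lsum_indicator_le p r _ (seq_NoDup (S (u 0%nat)) 0)); auto].
    right. apply lsum_ext_in. intros t _. unfold deg_count. cbn [gen_degs weight].
    rewrite count_occ_singleton. destruct (Nat.eqb t r); ring.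
  - rewrite lsum_flat_map. set (W := box_prob p d (shift u)).
    apply Rle_trans with (p r * W ^ r); [|apply mul_pow_le; auto; apply box_prob_bounds].
    eapply Rle_trans;
      [|apply (lsum_indicator_le (fun k => p k * W ^ k) r _ (seq_NoDup (S (u 0%nat)) 0));
        apply Rmult_le_pos; auto; apply pow_le, box_prob_bounds].
    right. apply lsum_ext_in. intros k _.
    rewrite (lsum_ext_in _ (fun l => (if Nat.eqb k r then 1 else 0) * weight p (S d) l)).
    + rewrite lsum_scal, lsum_weight_tuples, lsum_weight_trees_le. fold W.
      destruct (Nat.eqb k r); ring.
    + intros l Hl. apply In_tuples in Hl. destruct Hl as [<- _].
      unfold deg_count. rewrite gen_degs_S0, count_occ_singleton. ring.
Qed.

Lemma lsum_weight_deg_count_le d : forall g r u,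
  lsum (fun t => weight p d t * deg_count d g r t) (trees_le d u) <= mu ^ g * p r.
Proof.
  induction d as [|d IH]; intros [|g] r u; try (rewrite pow_O, Rmult_1_l; apply lsum_weight_deg_count_root).
  - rewrite (lsum_ext_in _ (fun _ => 0)), lsum_zero; [apply Rmult_le_pos; [apply pow_le, mu_nonneg|auto]|].
    intros t _. unfold deg_count. simpl. ring.
  - cbn [trees_le]. rewrite lsum_flat_map.
    apply Rle_trans with (lsum (fun k => (mu ^ g * p r) * (INR k * p k)) (seq 0 (S (u 0%nat)))).
    + apply lsum_le_in. intros k _.
      rewrite (lsum_ext_in _ (fun l => weight p (S d) l * lsum (deg_count d g r) l))
        by (intros; rewrite deg_count_SS; reflexivity).
      rewrite lsum_weight_tuples_count, lsum_weight_trees_le.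
      assert (Hkp : 0 <= p k * INR k) by (apply Rmult_le_pos; auto; apply pos_INR).
      assert (HA : 0 <= lsum (fun t => weight p d t * deg_count d g r t) (trees_le d (shift u))).
      { apply lsum_nonneg. intros t _. apply Rmult_le_pos; [apply weight_nonneg; auto|apply pos_INR]. }
      pose proof (mul_pow_le _ _ (pred k) HA (box_prob_bounds d (shift u))).
      specialize (IH g r (shift u)).
      assert (p k * INR k * (lsum (fun t => weight p d t * deg_count d g r t) (trees_le d (shift u))
                * box_prob p d (shift u) ^ pred k) <= p k * INR k * (mu ^ g * p r))
        by (apply Rmult_le_compat_l; lra).
      lra.
    + rewrite lsum_scal. fold (mean_upto (u 0%nat)). simpl pow.
      pose proof (mean_upto_le (u 0%nat)).
      assert (0 <= mu ^ g * p r) by (apply Rmult_le_pos; auto; apply pow_le, mu_nonneg).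
      nra.
Qed.

Definition excess d u := lsum (fun h => mu ^ h * mass_above (u h)) (seq 0 (S d)).

Lemma excess_nonneg d u : 0 <= excess d u.
Proof.
  apply lsum_nonneg. intros. apply Rmult_le_pos; [apply pow_le, mu_nonneg|apply mass_above_nonneg].
Qed.

Lemma excess_S d u : excess (S d) u = mass_above (u 0%nat) + mu * excess d (shift u).
Proof.
  unfold excess. change (seq 0 (S (S d))) with (0%nat :: seq 1 (S d)).
  rewrite <- seq_shift, lsum_cons, lsum_map, <- lsum_scal.
  simpl pow. rewrite Rmult_1_l. f_equal. apply lsum_ext_in. intros; unfold shift; ring.
Qed.

Lemma mul_excess_le c t d v : 0 <= c ->
  (forall h, (h <= d)%nat -> c * mass_above (v h) <= t) -> c * excess d v <= geom_sum mu d * t.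
Proof.
  intros Hc H. rewrite (Rmult_comm (geom_sum mu d)). unfold excess, geom_sum.
  rewrite <- !lsum_scal. apply lsum_le_in.
  intros h Hh. apply in_seq in Hh. specialize (H h ltac:(lia)).
  assert (0 <= mu ^ h) by (apply pow_le, mu_nonneg).
  replace (c * (mu ^ h * mass_above (v h))) with (mu ^ h * (c * mass_above (v h))) by ring.
  rewrite (Rmult_comm t). apply Rmult_le_compat_l; auto.
Qed.

(* Union bound: some vertex of generation h has out-degree larger than u h. *)
Lemma box_prob_ge d u : 1 - excess d u <= box_prob p d u.
Proof.
  revert u. induction d as [|d IH]; intros u.
  - unfold excess, mass_above. change (seq 0 1) with [0%nat].
    rewrite lsum_cons, lsum_nil, pow_O. unfold mass_upto. cbn [box_prob]. lra.
  - rewrite excess_S. cbn [box_prob]. specialize (IH (shift u)).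
    pose proof (box_prob_bounds d (shift u)) as HW.
    pose proof (excess_nonneg d (shift u)) as HA.
    set (A := excess d (shift u)) in *. set (W := box_prob p d (shift u)) in *.
    apply Rle_trans with (lsum (fun k => p k + (- A) * (INR k * p k)) (seq 0 (S (u 0%nat)))).
    + rewrite lsum_add, lsum_scal. fold (mass_upto (u 0%nat)) (mean_upto (u 0%nat)).
      unfold mass_above. pose proof (mean_upto_le (u 0%nat)).
      assert (A * mean_upto (u 0%nat) <= A * mu) by (apply Rmult_le_compat_l; auto). lra.
    + apply lsum_le_in. intros k _. pose proof (pow_ge_bernoulli W k HW).
      assert (0 <= p k) by auto. assert (0 <= INR k) by apply pos_INR.
      assert (1 - INR k * A <= W ^ k) by nra.
      assert (p k * (1 - INR k * A) <= p k * W ^ k) by (apply Rmult_le_compat_l; auto). nra.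
Qed.

Lemma lsum_mean_above_le U L :
  lsum (fun k => INR k * p k * (if Nat.ltb L k then 1 else 0)) (seq 0 (S U)) <= mu - mean_upto L.
Proof.
  set (M := Nat.max U L).
  set (f := fun k => INR k * p k * (if Nat.ltb L k then 1 else 0)).
  set (g := fun k => INR k * p k * (1 - if Nat.ltb L k then 1 else 0)).
  assert (Hfg : forall k, 0 <= f k /\ 0 <= g k).
  { intros k. unfold f, g. pose proof (pos_INR k). pose proof (p_nonneg k).
    destruct (Nat.ltb L k); split; nra. }
  assert (Hincl : forall a, (a <= M)%nat -> incl (seq 0 (S a)) (seq 0 (S M)))
    by (intros a Ha x Hx; apply in_seq in Hx; apply in_seq; lia).
  assert (lsum f (seq 0 (S U)) <= lsum f (seq 0 (S M)))
    by (apply lsum_le_incl; [apply seq_NoDup|apply Hincl; lia|intros; apply Hfg]).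
  assert (lsum g (seq 0 (S L)) <= lsum g (seq 0 (S M)))
    by (apply lsum_le_incl; [apply seq_NoDup|apply Hincl; lia|intros; apply Hfg]).
  assert (lsum f (seq 0 (S M)) + lsum g (seq 0 (S M)) = mean_upto M)
    by (rewrite <- lsum_add; apply lsum_ext_in; intros; unfold f, g; ring).
  assert (lsum g (seq 0 (S L)) = mean_upto L).
  { apply lsum_ext_in. intros k Hk. apply in_seq in Hk. unfold g.
    replace (Nat.ltb L k) with false by (symmetry; apply Nat.ltb_ge; lia). ring. }
  pose proof (mean_upto_le M). fold f. lra.
Qed.

(* Size-biased step: vertices with at most L children keep W^(k-1) >= 1 - L b,
   and those with more children carry at most mu - mean_upto L of the mean. *)
Lemma lsum_peak_level_ge x W b L U : 0 <= x -> 0 <= W <= 1 -> 1 - W <= b ->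
  x * (mean_upto U - INR L * b * mu - (mu - mean_upto L)) <=
  lsum (fun k => p k * INR k * x * W ^ (pred k)) (seq 0 (S U)).
Proof.
  intros Hx HW Hb.
  assert (HLb : 0 <= INR L * b) by (apply Rmult_le_pos; [apply pos_INR|lra]).
  apply Rle_trans with (lsum (fun k => x * (1 - INR L * b) * (INR k * p k) +
                (- x) * (INR k * p k * (if Nat.ltb L k then 1 else 0))) (seq 0 (S U))).
  - rewrite lsum_add, !lsum_scal. fold (mean_upto U).
    pose proof (lsum_mean_above_le U L).
    assert (x * (INR L * b) * mean_upto U <= x * (INR L * b) * mu)
      by (apply Rmult_le_compat_l; [apply Rmult_le_pos; auto|apply mean_upto_le]).
    assert (x * lsum (fun k => INR k * p k * (if Nat.ltb L k then 1 else 0)) (seq 0 (S U))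
            <= x * (mu - mean_upto L)) by (apply Rmult_le_compat_l; auto).
    nra.
  - apply lsum_le_in. intros k _.
    assert (HW' : 1 - INR L * b - (if Nat.ltb L k then 1 else 0) <= W ^ pred k).
    { destruct (Nat.ltb_spec L k).
      - assert (0 <= W ^ pred k) by (apply pow_le; lra). lra.
      - pose proof (pow_ge_bernoulli W (pred k) HW).
        assert (INR (pred k) <= INR L) by (apply le_INR; lia).
        assert (INR (pred k) * (1 - W) <= INR L * b)
          by (apply Rmult_le_compat; [apply pos_INR|lra|lra|lra]).
        lra. }
    assert (0 <= x * (INR k * p k))
      by (apply Rmult_le_pos; auto; apply Rmult_le_pos; [apply pos_INR|auto]).
    assert (x * (INR k * p k) * (1 - INR L * b - (if Nat.ltb L k then 1 else 0))
            <= x * (INR k * p k) * W ^ pred k) by (apply Rmult_le_compat_l; auto).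
    replace (p k * INR k * x * W ^ pred k) with (x * (INR k * p k) * W ^ pred k) by ring.
    lra.
Qed.

Lemma trees_peak_root_ge eps d r u : INR r * excess d (shift u) <= eps ->
  p r * (1 - eps) <= lsum (weight p (S d)) (trees_peak (S d) 0 r u).
Proof.
  intros Hr. rewrite lsum_weight_trees_peak_S0.
  pose proof (box_prob_ge d (shift u)). pose proof (box_prob_bounds d (shift u)) as HW.
  pose proof (pow_ge_bernoulli _ r HW). pose proof (pos_INR r). pose proof (p_nonneg r).
  assert (1 - eps <= box_prob p d (shift u) ^ r) by nra.
  apply Rmult_le_compat_l; auto.
Qed.

Lemma trees_peak_level_ge eps L d g r u :
  mu - mean_upto L <= eps -> mu - mean_upto (u 0%nat) <= eps ->
  INR L * mu * excess d (update (shift u) g (r - 1)) <= eps ->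
  (mu - 3 * eps) * lsum (weight p d) (trees_peak d g r (shift u)) <=
  lsum (weight p (S d)) (trees_peak (S d) (S g) r u).
Proof.
  intros HL Hu Hex. rewrite lsum_weight_trees_peak_SS.
  set (rho := lsum (weight p d) (trees_peak d g r (shift u))).
  set (v := update (shift u) g (r - 1)) in *.
  assert (Hrho : 0 <= rho) by (apply lsum_nonneg; intros; apply weight_nonneg; auto).
  pose proof (excess_nonneg d v). pose proof (pos_INR L). pose proof mu_nonneg.
  assert (Hb : 1 - box_prob p d v <= excess d v) by (pose proof (box_prob_ge d v); lra).
  pose proof (lsum_peak_level_ge rho _ _ L (u 0%nat) Hrho (box_prob_bounds d v) Hb) as Hstep.
  eapply Rle_trans; [|exact Hstep]. rewrite Rmult_comm.
  apply Rmult_le_compat_l; auto. lra.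
Qed.

(* [tau] bounds the tails P[D > u h] of the caps, [tau'] bounds r P[D > u h]
   for the caps below the peak, and [L] truncates the size-biased mean. *)
Lemma lsum_weight_trees_peak_ge eps tau tau' L G :
  0 <= eps -> 3 * eps <= mu -> mu - mean_upto L <= eps ->
  0 <= tau -> INR L * mu * G * tau <= eps -> 0 <= tau' -> G * tau' <= eps ->
  forall d g r u, geom_sum mu d <= G -> (g <= d)%nat -> (1 <= r)%nat ->
  (forall h, (h < g)%nat -> mu - mean_upto (u h) <= eps) ->
  (forall h, (h <= d)%nat -> h <> g -> mass_above (u h) <= tau) -> mass_above (r - 1) <= tau ->
  (forall h, (g < h)%nat -> (h <= d)%nat -> INR r * mass_above (u h) <= tau') ->
  p r * (mu - 3 * eps) ^ g * (1 - eps) <= lsum (weight p d) (trees_peak d g r u).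
Proof.
  intros He0 He3 HL Ht HLt Ht' HGt'.
  pose proof mu_nonneg as Hmu. pose proof (pos_INR L) as HL0.
  induction d as [|d IH]; intros g r u HG Hg Hr Hlow Hcap Hpeak Hbelow.
  - replace g with 0%nat by lia. cbn [trees_peak]. rewrite lsum_cons, lsum_nil.
    cbn [weight pow]. pose proof (p_nonneg r). nra.
  - assert (HGd : geom_sum mu d <= G) by (pose proof (geom_sum_le_S mu d Hmu); lra).
    pose proof (geom_sum_nonneg mu d Hmu).
    destruct g as [|g].
    + rewrite pow_O, Rmult_1_r. apply trees_peak_root_ge.
      assert (INR r * excess d (shift u) <= geom_sum mu d * tau')
        by (apply mul_excess_le; [apply pos_INR|intros h Hh; apply Hbelow; lia]).
      nra.
    + assert (Hex : excess d (update (shift u) g (r - 1)) <= geom_sum mu d * tau).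
      { rewrite <- (Rmult_1_l (excess _ _)). apply mul_excess_le; [lra|].
        intros h Hh. rewrite Rmult_1_l. unfold update, shift.
        destruct (Nat.eqb_spec h g); [assumption|apply Hcap; lia]. }
      eapply Rle_trans;
        [|apply (trees_peak_level_ge eps L); [assumption|apply Hlow; lia|]].
      * rewrite <- tech_pow_Rmult.
        assert (p r * (mu - 3 * eps) ^ g * (1 - eps) <= lsum (weight p d) (trees_peak d g r (shift u))).
        { apply IH; auto; [lia|intros h Hh; apply Hlow; lia|intros h Hh Hne; apply Hcap; lia|].
          intros h Hh1 Hh2. apply Hbelow; lia. }
        assert (0 <= mu - 3 * eps) by lra. nra.
      * assert (INR L * mu * excess d (update (shift u) g (r - 1)) <= INR L * mu * (G * tau)).
        { apply Rmult_le_compat_l; [apply Rmult_le_pos; auto|].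
          apply Rle_trans with (geom_sum mu d * tau); [assumption|apply Rmult_le_compat_r; auto]. }
        lra.
Qed.

End Offspring.

Lemma mul_div_succ_le a e : 0 <= a -> 0 <= e -> a * (e / (a + 1)) <= e.
Proof.
  intros Ha He. replace (a * (e / (a + 1))) with (e * (a / (a + 1))) by (field; lra).
  assert (a / (a + 1) <= 1).
  { apply Rmult_le_reg_r with (a + 1); [lra|]. unfold Rdiv. rewrite Rmult_assoc, Rinv_l; lra. }
  assert (0 <= a / (a + 1)) by (apply Rmult_le_pos; auto; left; apply Rinv_0_lt_compat; lra).
  nra.
Qed.

Lemma lsum_seq_sum f n : lsum f (seq 0 (S n)) = sum_f_R0 f n.
Proof.
  induction n as [|n IH]; [simpl; unfold lsum; simpl; lra|].
  rewrite seq_S, lsum_app, IH, lsum_cons, lsum_nil. simpl. ring.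
Qed.

Lemma partial_sum_le f l : (forall k, 0 <= f k) -> infinite_sum f l -> forall n, sum_f_R0 f n <= l.
Proof.
  intros Hf Hs. apply growing_ineq; [|exact Hs]. intros n. simpl. specialize (Hf (S n)). lra.
Qed.

Lemma partial_sum_deficit f l : infinite_sum f l ->
  forall e, 0 < e -> exists B, forall n, (B <= n)%nat -> l - sum_f_R0 f n <= e.
Proof.
  intros Hs e He. destruct (Hs e He) as [B HB]. exists B. intros n Hn. specialize (HB n Hn).
  unfold R_dist in HB. pose proof (Rle_abs (-(sum_f_R0 f n - l))). rewrite Rabs_Ropp in *. lra.
Qed.

Section Series.

Variable p : nat -> R.
Hypothesis p_nonneg : forall k, 0 <= p k.
Hypothesis p_sum : infinite_sum p 1.
Variable mu : R.
Hypothesis p_mean : infinite_sum (fun k => INR k * p k) mu.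

Lemma mass_upto_le_1 x : mass_upto p x <= 1.
Proof. unfold mass_upto. rewrite lsum_seq_sum. apply partial_sum_le; auto. Qed.

Lemma mean_upto_le x : mean_upto p x <= mu.
Proof.
  unfold mean_upto. rewrite lsum_seq_sum. apply partial_sum_le; auto.
  intros k. apply Rmult_le_pos; auto. apply pos_INR.
Qed.

Lemma mass_above_vanishes e : 0 < e -> exists B, forall x, (B <= x)%nat -> mass_above p x <= e.
Proof.
  intros He. destruct (partial_sum_deficit p 1 p_sum e He) as [B HB]. exists B. intros x Hx.
  unfold mass_above, mass_upto. rewrite lsum_seq_sum. auto.
Qed.

Lemma mean_deficit_vanishes e : 0 < e -> exists B, forall x, (B <= x)%nat -> mu - mean_upto p x <= e.
Proof.
  intros He. destruct (partial_sum_deficit _ mu p_mean e He) as [B HB]. exists B. intros x Hx.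
  unfold mean_upto. rewrite lsum_seq_sum. auto.
Qed.

(* r P[D >= r] <= E[D; D >= r], where P[D >= r] = mass_above (r - 1). *)
Lemma mul_mass_above_le r : (1 <= r)%nat -> INR r * mass_above p (r - 1) <= mu - mean_upto p (r - 1).
Proof.
  intros Hr. pose proof (pos_INR r).
  assert (Hbetween : forall M, (r - 1 <= M)%nat ->
            INR r * (mass_upto p M - mass_upto p (r - 1)) <= mean_upto p M - mean_upto p (r - 1)).
  { intros M HM. induction HM as [|M HM IH]; [lra|].
    unfold mass_upto, mean_upto in *. rewrite !(seq_S (S M)), !lsum_app, !lsum_cons, !lsum_nil.
    assert (INR r <= INR (S M)) by (apply le_INR; lia).
    assert (INR r * p (S M) <= INR (S M) * p (S M)) by (apply Rmult_le_compat_r; auto).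
    simpl (0 + S M)%nat. lra. }
  apply Rle_plus_epsilon. intros e He.
  destruct (mass_above_vanishes (e / (INR r + 1))) as [B HB]; [apply Rdiv_lt_0_compat; lra|].
  set (M := Nat.max B (r - 1)).
  specialize (HB M ltac:(lia)). specialize (Hbetween M ltac:(lia)).
  pose proof (mean_upto_le M). pose proof (mul_div_succ_le (INR r) e ltac:(lra) ltac:(lra)).
  assert (INR r * mass_above p M <= INR r * (e / (INR r + 1))) by (apply Rmult_le_compat_l; auto).
  unfold mass_above in *. lra.
Qed.

End Series.

Lemma Prob_lub p N (E : gwt N -> Prop) B :
  (forall l, NoDup l -> Forall E l -> lsum (weight p N) l <= B) ->
  is_lub (fun y => exists l : list (gwt N), NoDup l /\ Forall E l /\ y = lsum (weight p N) l)
    (Prob p N E).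
Proof.
  intros H. unfold Prob. apply epsilon_spec.
  destruct (completeness (fun y => exists l : list (gwt N),
                            NoDup l /\ Forall E l /\ y = lsum (weight p N) l)) as [x Hx].
  - exists B. intros y [l [H1 [H2 ->]]]. apply H; auto.
  - exists 0, []. repeat constructor.
  - exists x. exact Hx.
Qed.

Lemma maxdeg_eq d n (t : gwt d) r :
  In r (gen_degs d n t) -> (forall x, In x (gen_degs d n t) -> (x <= r)%nat) -> maxdeg d n t = r.
Proof.
  unfold maxdeg. induction (gen_degs d n t) as [|a l IH]; simpl; intros H1 H2; [destruct H1|].
  destruct H1 as [->|H1].
  - assert (fold_right Nat.max 0%nat l <= r)%nat.
    { change (list_max l <= r)%nat. apply list_max_le, Forall_forall. intros; apply H2; auto. }
    lia.
  - specialize (IH H1 ltac:(auto)). specialize (H2 a (or_introl eq_refl)). lia.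
Qed.

Lemma maxdeg_le d n (t : gwt d) r :
  (forall x, In x (gen_degs d n t) -> (x <= r)%nat) -> (maxdeg d n t <= r)%nat.
Proof. intros H. apply list_max_le, Forall_forall. exact H. Qed.

Lemma In_maxdeg d n (t : gwt d) : (1 <= maxdeg d n t)%nat -> In (maxdeg d n t) (gen_degs d n t).
Proof.
  unfold maxdeg. induction (gen_degs d n t) as [|a l IH]; simpl; intros H; [lia|].
  destruct (Nat.max_spec a (fold_right Nat.max 0%nat l)) as [[_ E]|[_ E]]; rewrite E in *; auto.
Qed.

Definition event_E N m (n rk : nat -> nat) (t : gwt N) : Prop :=
  exists i, (i < m)%nat /\ maxdeg N (n i) t = rk i /\
    (forall j, (j < m)%nat -> j <> i -> (maxdeg N (n j) t < rk j)%nat).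

Lemma lsum_weight_event_E_le p mu N m (n rk : nat -> nat) :
  (forall k, 0 <= p k) -> (forall x, mass_upto p x <= 1) -> (forall x, mean_upto p x <= mu) ->
  (forall i, (i < m)%nat -> (1 <= rk i)%nat) ->
  forall l, NoDup l -> Forall (event_E N m n rk) l ->
  lsum (weight p N) l <= lsum (fun i => mu ^ (n i) * p (rk i)) (seq 0 m).
Proof.
  intros Hp H1 Hmu Hr l Hnd HE. destruct (incl_trees_le_const N l) as [K HK].
  set (c := fun t => lsum (fun i => deg_count N (n i) (rk i) t) (seq 0 m)).
  assert (Hc : forall t, 0 <= c t) by (intros; apply lsum_nonneg; intros; apply pos_INR).
  apply Rle_trans with (lsum (fun t => weight p N t * c t) l).
  { apply lsum_le_in. intros t Ht. rewrite Forall_forall in HE.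
    destruct (HE t Ht) as [i [Hi [Hmax _]]].
    assert (1 <= c t).
    { apply Rle_trans with (deg_count N (n i) (rk i) t).
      - pose proof (Hr i Hi) as Hri. rewrite <- Hmax in Hri.
        apply In_maxdeg, (count_occ_In Nat.eq_dec), le_INR in Hri.
        unfold deg_count. rewrite <- Hmax. simpl in Hri. lra.
      - apply (lsum_ge_member (fun i => deg_count N (n i) (rk i) t)); [intros; apply pos_INR|].
        apply in_seq. lia. }
    pose proof (weight_nonneg p N t Hp). nra. }
  apply Rle_trans with (lsum (fun t => weight p N t * c t) (trees_le N (fun _ => K))).
  { apply lsum_le_incl; auto. intros. apply Rmult_le_pos; auto. apply weight_nonneg; auto. }
  unfold c. rewrite (lsum_ext_in _ (fun t => lsum (fun i => weight p N t * deg_count N (n i) (rk i) t) (seq 0 m)))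
    by (intros; rewrite lsum_scal; reflexivity).
  rewrite lsum_comm. apply lsum_le_in. intros i _. apply lsum_weight_deg_count_le; auto.
Qed.

(* The caps for the lower bound: generation [n j] (j <> i) is capped at
   [rk j - 1], every other generation at [K]. *)
Definition thresholds (n rk : nat -> nat) m K i : nat -> nat := fun g =>
  match find (fun j => andb (Nat.eqb (n j) g) (negb (Nat.eqb j i))) (seq 0 m) with
  | Some j => (rk j - 1)%nat
  | None => K
  end.

Lemma thresholds_cases n rk m K i g : thresholds n rk m K i g = K \/
  exists j, (j < m)%nat /\ j <> i /\ n j = g /\ thresholds n rk m K i g = (rk j - 1)%nat.
Proof.
  unfold thresholds. destruct (find _ _) as [j|] eqn:E; [right|left; reflexivity].
  apply find_some in E. destruct E as [E1 E2]. apply andb_prop in E2. destruct E2 as [E2 E3].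
  apply Nat.eqb_eq in E2. apply Bool.negb_true_iff, Nat.eqb_neq in E3. apply in_seq in E1.
  exists j. repeat split; auto; lia.
Qed.

Section Peaks.

Variables (N m : nat) (n rk : nat -> nat).
Hypothesis n_inj : forall a b, (a < m)%nat -> (b < m)%nat -> n a = n b -> a = b.
Hypothesis rk_pos : forall i, (i < m)%nat -> (1 <= rk i)%nat.

Lemma thresholds_at K i j : (j < m)%nat -> j <> i -> thresholds n rk m K i (n j) = (rk j - 1)%nat.
Proof.
  intros Hj Hji. unfold thresholds. destruct (find _ _) as [a|] eqn:E.
  - apply find_some in E. destruct E as [E1 E2]. apply andb_prop in E2. destruct E2 as [E2 _].
    apply Nat.eqb_eq in E2. apply in_seq in E1. rewrite (n_inj a j); auto. lia.
  - exfalso. pose proof (find_none _ _ E j) as H. cbv beta in H.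
    rewrite Nat.eqb_refl in H. replace (Nat.eqb j i) with false in H by (symmetry; apply Nat.eqb_neq; auto).
    assert (In j (seq 0 m)) by (apply in_seq; lia). specialize (H H0). discriminate.
Qed.

Lemma trees_peak_thresholds_event K i t : (i < m)%nat ->
  In t (trees_peak N (n i) (rk i) (thresholds n rk m K i)) -> event_E N m n rk t.
Proof.
  intros Hi Ht. apply trees_peak_spec in Ht. destruct Ht as [A1 [A2 A3]].
  exists i. split; [assumption|split; [apply maxdeg_eq; auto|]].
  intros j Hj Hji. pose proof (rk_pos j Hj).
  assert (maxdeg N (n j) t <= rk j - 1)%nat; [|lia].
  apply maxdeg_le. intros x Hx. rewrite <- (thresholds_at K i j Hj Hji).
  apply A3; [|exact Hx]. intros E. apply Hji, n_inj; auto.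
Qed.

Lemma event_list_from_peaks p K : exists l, NoDup l /\ Forall (event_E N m n rk) l /\
  lsum (weight p N) l =
  lsum (fun i => lsum (weight p N) (trees_peak N (n i) (rk i) (thresholds n rk m K i))) (seq 0 m).
Proof.
  exists (flat_map (fun i => trees_peak N (n i) (rk i) (thresholds n rk m K i)) (seq 0 m)).
  split; [|split].
  - apply NoDup_flat_map; [apply seq_NoDup|intros i Hi; apply in_seq in Hi; apply NoDup_trees_peak, rk_pos; lia|].
    intros i j t Hi Hj Hne H1 H2. apply in_seq in Hi, Hj.
    apply trees_peak_spec in H1. destruct H1 as [B1 _].
    apply trees_peak_spec in H2. destruct H2 as [_ [_ B3]].
    assert (n i <> n j) by (intro E; apply Hne, n_inj; auto; lia).
    specialize (B3 (n i) (rk i) H B1). rewrite thresholds_at in B3; try lia.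
    specialize (rk_pos i ltac:(lia)). lia.
  - apply Forall_forall. intros t Ht. apply in_flat_map in Ht. destruct Ht as [i [Hi Ht]].
    apply in_seq in Hi. apply (trees_peak_thresholds_event K i); auto. lia.
  - apply lsum_flat_map.
Qed.

End Peaks.

Lemma eventually_forall_lt (Q : nat -> nat -> Prop) m :
  (forall i, (i < m)%nat -> exists K, forall k, (K <= k)%nat -> Q i k) ->
  exists K, forall k, (K <= k)%nat -> forall i, (i < m)%nat -> Q i k.
Proof.
  induction m as [|m IH]; intros H; [exists 0%nat; intros; lia|].
  destruct IH as [K1 HK1]; [intros; apply H; lia|]. destruct (H m ltac:(lia)) as [K2 HK2].
  exists (Nat.max K1 K2). intros k Hk i Hi.
  destruct (Nat.eq_dec i m) as [->|]; [apply HK2|apply HK1]; lia.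
Qed.

Lemma pow_sub_ge mu eps n : 0 < mu -> 0 <= 3 * eps <= mu ->
  mu ^ n * (1 - INR n * (3 * eps / mu)) <= (mu - 3 * eps) ^ n.
Proof.
  intros Hmu He. replace (mu - 3 * eps) with (mu * (1 - 3 * eps / mu)) by (field; lra).
  rewrite Rpow_mult_distr. apply Rmult_le_compat_l; [apply pow_le; lra|].
  replace (1 - INR n * (3 * eps / mu)) with (1 - INR n * (1 - (1 - 3 * eps / mu))) by ring.
  apply pow_ge_bernoulli.
  assert (0 <= 3 * eps / mu <= 1); [|lra]. split.
  - apply Rmult_le_pos; [lra|left; apply Rinv_0_lt_compat; auto].
  - apply Rmult_le_reg_r with mu; auto. unfold Rdiv. rewrite Rmult_assoc, Rinv_l; lra.
Qed.

Lemma small_eps_factor mu N dl : 0 < mu -> 0 < dl <= 1 ->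
  exists eps, 0 < eps /\ 3 * eps <= mu /\
    forall n, (n <= N)%nat -> (1 - dl) * mu ^ n <= (mu - 3 * eps) ^ n * (1 - eps).
Proof.
  intros Hmu Hdl. pose proof (pos_INR N) as HN.
  set (Q := 3 * INR N + mu + 3).
  exists (dl * mu / Q).
  assert (HQ : 0 < Q) by (unfold Q; lra).
  assert (He : 0 < dl * mu / Q) by (apply Rdiv_lt_0_compat; nra).
  assert (H3 : 3 * (dl * mu / Q) <= mu).
  { apply Rmult_le_reg_r with Q; auto. field_simplify; [|lra]. unfold Q. nra. }
  assert (Hsum : INR N * (3 * (dl * mu / Q) / mu) + dl * mu / Q <= dl).
  { replace (INR N * (3 * (dl * mu / Q) / mu) + dl * mu / Q) with (dl * ((3 * INR N + mu) / Q))
      by (field; lra).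
    assert ((3 * INR N + mu) / Q <= 1).
    { apply Rmult_le_reg_r with Q; auto. unfold Rdiv. rewrite Rmult_assoc, Rinv_l; unfold Q; lra. }
    nra. }
  split; [exact He|split; [exact H3|]].
  intros n Hn. set (eps := dl * mu / Q) in *.
  pose proof (pow_sub_ge mu eps n Hmu ltac:(lra)) as Hp.
  assert (Hq : 0 <= 3 * eps / mu) by (apply Rmult_le_pos; [lra|left; apply Rinv_0_lt_compat; auto]).
  assert (INR n * (3 * eps / mu) <= INR N * (3 * eps / mu))
    by (apply Rmult_le_compat_r; auto; apply le_INR; auto).
  set (a := INR n * (3 * eps / mu)) in *.
  assert (0 <= a) by (apply Rmult_le_pos; auto; apply pos_INR).
  assert (Hmn : 0 <= mu ^ n) by (apply pow_le; lra).
  assert (mu ^ n * (1 - a) * (1 - eps) <= (mu - 3 * eps) ^ n * (1 - eps))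
    by (apply Rmult_le_compat_r; [nra|auto]).
  assert (mu ^ n * (1 - dl) <= mu ^ n * ((1 - a) * (1 - eps))) by (apply Rmult_le_compat_l; nra).
  nra.
Qed.

Lemma ratio_close a D dl : 0 < D -> (1 - dl) * D <= a -> a <= D -> Rabs (a / D - 1) <= dl.
Proof.
  intros HD H1 H2. replace (a / D - 1) with ((a - D) / D) by (field; lra).
  unfold Rdiv. rewrite Rabs_mult, Rabs_inv, (Rabs_right D), Rabs_left1 by lra.
  apply Rmult_le_reg_r with D; auto. rewrite Rmult_assoc, Rinv_l; lra.
Qed.

Section Asymptotics.

Variables (p : nat -> R) (mu : R).
Hypothesis p_nonneg : forall k, 0 <= p k.
Hypothesis p_sum : infinite_sum p 1.
Hypothesis p_mean : infinite_sum (fun k => INR k * p k) mu.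
Hypothesis mu_pos : 0 < mu.

Variables (m : nat) (n : nat -> nat) (r : nat -> nat -> nat).
Hypothesis n_incr : forall i j, (i < j)%nat -> (j < m)%nat -> (n i < n j)%nat.
Hypothesis r_pos : forall k i, (1 <= k)%nat -> (i < m)%nat -> (1 <= r k i)%nat.
Hypothesis r_inf : forall B : nat, exists K : nat, forall k i,
  (K <= k)%nat -> (i < m)%nat -> (B <= r k i)%nat.
Hypothesis r_ratio : forall j, (j + 1 < m)%nat -> exists C : R, exists K : nat,
  forall k i, (K <= k)%nat -> (j < i)%nat -> (i < m)%nat -> INR (r k j) <= C * INR (r k i).

Let N := n (m - 1).

Lemma n_inj a b : (a < m)%nat -> (b < m)%nat -> n a = n b -> a = b.
Proof.
  intros Ha Hb E. destruct (Nat.lt_trichotomy a b) as [H|[H|H]]; auto.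
  - pose proof (n_incr a b H Hb). lia.
  - pose proof (n_incr b a H Ha). lia.
Qed.

Lemma n_le_N i : (i < m)%nat -> (n i <= N)%nat.
Proof.
  intros Hi. unfold N. destruct (Nat.eq_dec i (m - 1)) as [->|]; [lia|].
  pose proof (n_incr i (m - 1)%nat ltac:(lia) ltac:(lia)). lia.
Qed.

(* The ratio hypothesis turns r_j P[D >= r_j] -> 0 into r_i P[D >= r_j] -> 0. *)
Lemma ratio_tail_vanishes tau : 0 < tau -> exists K, forall k, (K <= k)%nat ->
  forall i j, (i < j)%nat -> (j < m)%nat -> INR (r k i) * mass_above p (r k j - 1) <= tau.
Proof.
  intros Htau.
  destruct (eventually_forall_lt (fun i k => forall j, (i < j)%nat -> (j < m)%nat ->
              INR (r k i) * mass_above p (r k j - 1) <= tau) m) as [K HK].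
  - intros i Hi. destruct (Compare_dec.lt_dec (i + 1) m) as [Him|Him];
      [|exists 0%nat; intros k _ j Hij Hj; lia].
    destruct (r_ratio i Him) as [C [Kr HKr]].
    set (c := Rabs C). assert (Hc : 0 <= c) by apply Rabs_pos.
    destruct (mean_deficit_vanishes p mu p_mean (tau / (c + 1))) as [B HB];
      [apply Rdiv_lt_0_compat; lra|].
    destruct (r_inf (S B)) as [Ki HKi].
    exists (Nat.max Kr Ki). intros k Hk j Hij Hj.
    pose proof (HKi k j ltac:(lia) Hj) as Hrj.
    pose proof (mul_mass_above_le p p_nonneg p_sum mu p_mean (r k j) ltac:(lia)) as Hmk.
    pose proof (HB (r k j - 1)%nat ltac:(lia)) as Hdef.
    pose proof (mass_above_nonneg p (mass_upto_le_1 p p_nonneg p_sum) (r k j - 1)) as Hma.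
    assert (INR (r k i) <= c * INR (r k j)).
    { eapply Rle_trans; [apply (HKr k j); lia|]. apply Rmult_le_compat_r; [apply pos_INR|apply Rle_abs]. }
    assert (INR (r k i) * mass_above p (r k j - 1) <= c * (INR (r k j) * mass_above p (r k j - 1)))
      by (rewrite <- Rmult_assoc; apply Rmult_le_compat_r; auto).
    assert (c * (INR (r k j) * mass_above p (r k j - 1)) <= c * (tau / (c + 1)))
      by (apply Rmult_le_compat_l; lra).
    pose proof (mul_div_succ_le c tau Hc ltac:(lra)). lra.
  - exists K. intros k Hk i j Hij Hj. apply (HK k Hk i); lia.
Qed.

Lemma mul_mass_above_vanishes k tau : 0 < tau -> exists K, forall x, (K <= x)%nat ->
  forall i, (i < m)%nat -> INR (r k i) * mass_above p x <= tau.
Proof.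
  intros Htau. apply (eventually_forall_lt (fun i x => INR (r k i) * mass_above p x <= tau)).
  intros i _. pose proof (pos_INR (r k i)).
  destruct (mass_above_vanishes p p_sum (tau / (INR (r k i) + 1))) as [B HB];
    [apply Rdiv_lt_0_compat; lra|].
  exists B. intros x Hx. eapply Rle_trans; [|apply (mul_div_succ_le (INR (r k i)) tau); lra].
  apply Rmult_le_compat_l; auto.
Qed.

Lemma peaks_weight_ge eps : 0 < eps -> 3 * eps <= mu ->
  exists K0, forall k, (K0 <= k)%nat -> exists K, forall i, (i < m)%nat ->
    p (r k i) * (mu - 3 * eps) ^ (n i) * (1 - eps) <=
    lsum (weight p N) (trees_peak N (n i) (r k i) (thresholds n (r k) m K i)).
Proof.
  intros He0 He3.
  pose proof (mass_upto_le_1 p p_nonneg p_sum) as Hmass.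
  pose proof (mean_upto_le p p_nonneg mu p_mean) as Hmean.
  destruct (mean_deficit_vanishes p mu p_mean eps He0) as [L HL].
  set (G := geom_sum mu N).
  assert (HG : 0 <= G) by (apply geom_sum_nonneg; lra).
  assert (HLG : 0 <= INR L * mu * G) by (apply Rmult_le_pos; [apply Rmult_le_pos; [apply pos_INR|lra]|auto]).
  set (tau := eps / (INR L * mu * G + 1)).
  assert (Htau : 0 < tau) by (apply Rdiv_lt_0_compat; lra).
  set (tau' := eps / (G + 1)).
  assert (Htau' : 0 < tau') by (apply Rdiv_lt_0_compat; lra).
  destruct (mass_above_vanishes p p_sum tau Htau) as [B HB].
  destruct (r_inf (S (Nat.max L B))) as [KA HKA].
  destruct (ratio_tail_vanishes tau' Htau') as [Kc HKc].
  exists (Nat.max (Nat.max KA Kc) 1). intros k Hk.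
  destruct (mul_mass_above_vanishes k tau' Htau') as [K' HK'].
  exists (Nat.max K' (Nat.max L B)). intros i Hi.
  apply (lsum_weight_trees_peak_ge p p_nonneg Hmass mu Hmean eps tau tau' L G
           ltac:(lra) He3 (HL L (le_n L)) ltac:(lra) ltac:(apply mul_div_succ_le; lra)
           ltac:(lra) ltac:(apply mul_div_succ_le; lra)).
  - apply Rle_refl.
  - apply n_le_N; auto.
  - apply r_pos; lia.
  - intros h _. destruct (thresholds_cases n (r k) m (Nat.max K' (Nat.max L B)) i h)
      as [E|[j [Hj [_ [_ E]]]]]; rewrite E; apply HL; [lia|].
    pose proof (HKA k j ltac:(lia) Hj). lia.
  - intros h _ _. destruct (thresholds_cases n (r k) m (Nat.max K' (Nat.max L B)) i h)
      as [E|[j [Hj [_ [_ E]]]]]; rewrite E; apply HB; [lia|].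
    pose proof (HKA k j ltac:(lia) Hj). lia.
  - apply HB. pose proof (HKA k i ltac:(lia) Hi). lia.
  - intros h Hh1 Hh2. destruct (thresholds_cases n (r k) m (Nat.max K' (Nat.max L B)) i h)
      as [E|[j [Hj [Hji [Hnj E]]]]]; rewrite E; [apply HK'; lia|].
    assert (i < j)%nat.
    { destruct (Nat.lt_trichotomy i j) as [H|[H|H]]; [auto|congruence|].
      pose proof (n_incr j i H Hi). lia. }
    apply HKc; lia.
Qed.

Lemma event_E_weight_le k : (1 <= k)%nat ->
  forall l, NoDup l -> Forall (event_E N m n (r k)) l ->
  lsum (weight p N) l <= sum_lt m (fun i => mu ^ (n i) * p (r k i)).
Proof.
  intros Hk. apply lsum_weight_event_E_le;
    [exact p_nonneg|apply mass_upto_le_1; auto|apply mean_upto_le; auto|].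
  intros i Hi. apply r_pos; auto.
Qed.

Lemma Prob_event_E_le k : (1 <= k)%nat ->
  Prob p N (event_E N m n (r k)) <= sum_lt m (fun i => mu ^ (n i) * p (r k i)).
Proof.
  intros Hk. apply (Prob_lub p N _ _ (event_E_weight_le k Hk)).
  intros y [l [H1 [H2 ->]]]. apply event_E_weight_le; auto.
Qed.

Lemma Prob_event_E_ge dl : 0 < dl <= 1 -> exists K0, forall k, (K0 <= k)%nat ->
  (1 - dl) * sum_lt m (fun i => mu ^ (n i) * p (r k i)) <= Prob p N (event_E N m n (r k)).
Proof.
  intros Hdl. destruct (small_eps_factor mu N dl mu_pos Hdl) as [eps [He0 [He3 Hfactor]]].
  destruct (peaks_weight_ge eps He0 He3) as [K0 HK0].
  exists (Nat.max K0 1). intros k Hk. destruct (HK0 k ltac:(lia)) as [K HK].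
  destruct (event_list_from_peaks N m n (r k) n_inj (fun i Hi => r_pos k i ltac:(lia) Hi) p K)
    as [l [Hnd [Hev Hsum]]].
  apply Rle_trans with (lsum (weight p N) l).
  - rewrite Hsum. unfold sum_lt. rewrite <- lsum_scal. apply lsum_le_in. intros i Hi.
    apply in_seq in Hi. eapply Rle_trans; [|apply HK; lia].
    pose proof (Hfactor (n i) (n_le_N i ltac:(lia))). pose proof (p_nonneg (r k i)).
    replace ((1 - dl) * (mu ^ n i * p (r k i))) with (p (r k i) * ((1 - dl) * mu ^ n i)) by ring.
    rewrite Rmult_assoc. apply Rmult_le_compat_l; auto.
  - apply (Prob_lub p N _ _ (event_E_weight_le k ltac:(lia))). exists l. auto.
Qed.

End Asymptotics.

Theorem proposition2p4
  (p : nat -> R) (mu : R)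
  (hp_nonneg : forall k, 0 <= p k)
  (hp_sum : infinite_sum p 1)
  (hmu : infinite_sum (fun k => INR k * p k) mu)
  (hmu_pos : 0 < mu)
  (hp_unbdd : forall B : nat, exists r : nat, (B <= r)%nat /\ 0 < p r)
  (m : nat) (hm : (1 <= m)%nat)
  (n : nat -> nat)
  (hn_pos : forall i, (i < m)%nat -> (1 <= n i)%nat)
  (hn_incr : forall i j, (i < j)%nat -> (j < m)%nat -> (n i < n j)%nat)
  (r : nat -> nat -> nat)
  (hr_pos : forall k i, (1 <= k)%nat -> (i < m)%nat -> (1 <= r k i)%nat)
  (hr_sum : forall k, (1 <= k)%nat -> 0 < sum_lt m (fun i => p (r k i)))
  (hr_inf : forall B : nat, exists K : nat, forall k i,
      (K <= k)%nat -> (i < m)%nat -> (B <= r k i)%nat)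
  (hr_ratio : forall j, (j + 1 < m)%nat ->
      exists C : R, exists K : nat, forall k i,
        (K <= k)%nat -> (j < i)%nat -> (i < m)%nat ->
        INR (r k j) <= C * INR (r k i)) :
  let N := n (m - 1)%nat in
  Un_cv
    (fun k =>
       Prob p N (fun t =>
          exists i, (i < m)%nat /\ maxdeg N (n i) t = r k i /\
            (forall j, (j < m)%nat -> j <> i -> (maxdeg N (n j) t < r k j)%nat))
       / sum_lt m (fun i => mu ^ (n i) * p (r k i)))
    1.
Proof.
  intros N e He. set (dl := Rmin (e / 2) 1).
  assert (Hdl : 0 < dl <= 1) by (split; [apply Rmin_glb_lt|apply Rmin_r]; lra).
  assert (Hdle : dl < e) by (pose proof (Rmin_l (e / 2) 1); unfold dl; lra).
  destruct (Prob_event_E_ge p mu hp_nonneg hp_sum hmu hmu_pos m n r hn_incr hr_pos hr_inf hr_ratio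
              dl Hdl) as [K0 HK0].
  exists (Nat.max K0 1). intros k Hk. unfold R_dist. fold (event_E N m n (r k)).
  assert (HD : 0 < sum_lt m (fun i => mu ^ (n i) * p (r k i))).
  { destruct (lsum_pos_member _ _ (hr_sum k ltac:(lia))) as [i [Hi Hpi]].
    eapply Rlt_le_trans; [|apply (lsum_ge_member (fun i => mu ^ n i * p (r k i))); [|exact Hi]].
    - apply Rmult_lt_0_compat; [apply pow_lt|]; auto.
    - intros; apply Rmult_le_pos; [apply pow_le; lra|auto]. }
  eapply Rle_lt_trans; [apply ratio_close; [exact HD|apply HK0; lia|]|exact Hdle].
  apply (Prob_event_E_le p mu hp_nonneg hp_sum hmu m n r hr_pos); lia.
Qed.
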